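(* Let $G$ be a finite group, let $k \leq m(G)$, and let $s=(g_1,\dots,g_k)$ be an irredundant generating sequence for $G$. Suppose that for every corresponding collection $(M_1,\dots,M_k)$ of maximal subgroups in general position there exists $r \in \{1,\dots,k\}$ such that: (1) $M_r = \langle g_i : i \neq r\rangle$; (2) $m(M_r) = k-1$; (3) $M_r$ satisfies the replacement property. Then $s$ satisfies the replacement property.
   Context: For a finite group $G$, a finite sequence $s=(g_1,\dots,g_k)$ of elements of $G$ is an irredundant generating sequence if $\langle g_1,\dots,g_k\rangle = G$ and $g_i \notin \langle g_j : j \neq i\rangle$ for every $i$. $m(G)$ denotes the maximal length of an irredundant generating sequence of $G$. An irredundant generating sequence $s=(g_1,\dots,g_k)$ satisfies the replacement property if for every nontrivial $g \in G$ there is an index $i$ such that $(g_1,\dots,g_{i-1},g,g_{i+1},\dots,g_k)$ generates $G$ (not necessarily irredundantly); a group $H$ satisfies the replacement property if every irredundant generating sequence of $H$ of length $m(H)$ does. A collection of subgroups $\{H_i\}_{i \in I}$ is in general position if for every $j \in I$, $\bigcap_{i\in I} H_i$ is properly contained in $\bigcap_{i \in I\setminus\{j\}} H_i$. A corresponding collection of maximal subgroups for $s$ is a sequence $(M_1,\dots,M_k)$ of maximal subgroups of $G$ with $M_i \supseteq \langle g_j : j \neq i\rangle$ for each $i$. *)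

From HB Require Import structures.
From mathcomp Require Import all_boot all_fingroup gseries.
Set Implicit Arguments. Unset Strict Implicit. Unset Printing Implicit Defensive.
Local Open Scope group_scope.

Section IrrGen.
Variable gT : finGroupType.

Definition others (s : seq gT) (i : nat) : {set gT} :=
  [set nth 1 s j | j : 'I_(size s) & val j != i].

Definition irr_gen (G : {set gT}) (s : seq gT) : bool :=
  (<<[set x in s]>> == G) &&
  [forall i : 'I_(size s), nth 1 s i \notin <<others s i>>].

(* m(G): maximal length of an irredundant generating sequence of G.
   (Such sequences consist of distinct nontrivial elements of G, so their
   length is < #|G|.+1; the bound is harmless.) *)
Definition mlen (G : {set gT}) : nat :=
  \max_(n < #|G|.+1 | [exists t : (nat_of_ord n).-tuple gT, irr_gen G t]) n.

Definition repl_seq (G : {set gT}) (s : seq gT) : Prop :=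
  forall g, g \in G -> g != 1 ->
    exists i : 'I_(size s), <<[set x in set_nth 1 s i g]>> = G.

Definition repl_group (H : {set gT}) : Prop :=
  forall s : seq gT, irr_gen H s -> size s = mlen H -> repl_seq H s.

Definition gen_pos (G : {set gT}) (k : nat) (M : 'I_k -> {set gT}) : Prop :=
  forall j : 'I_k,
    (G :&: \bigcap_(i < k) M i) \proper (G :&: \bigcap_(i < k | i != j) M i).

End IrrGen.

From HB Require Import structures.
From mathcomp Require Import all_boot all_fingroup gseries.
From mathcomp Require Import zify.
Set Implicit Arguments. Unset Strict Implicit. Unset Printing Implicit Defensive.
Local Open Scope group_scope.

(* Suppose some g <> 1 can replace no entry of s.  Then each
   <<s with g_i replaced by g>> lies in a maximal subgroup M_i, which contains
   g and every g_j with j <> i but not g_i; so the g_j witness that the M_i are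
   in general position.  By hypothesis some M_r = <<g_j : j <> r>> has
   m(M_r) = k - 1 and the replacement property, and s with g_r deleted is an
   irredundant generating sequence of M_r of that length.  Hence g replaces
   some g_j (j <> r) in it, and since g_r lies in M_r, g also replaces g_j in
   s: a contradiction. *)

Section Others.
Variable gT : finGroupType.
Implicit Types (s : seq gT) (x y : gT) (B : {set gT}).

Lemma mem_others s i l : l < size s -> l != i -> nth 1 s l \in others s i.
Proof. by move=> lt_l ne_li; apply/imsetP; exists (Ordinal lt_l); rewrite ?inE. Qed.

Lemma others_subset s i B :
  (forall l, l < size s -> l != i -> nth 1 s l \in B) -> others s i \subset B.
Proof. move=> sB; apply/subsetP=> x /imsetP[l]; rewrite inE => ne_li ->; exact: sB. Qed.

Lemma set_nth_others s i y :
  i < size s -> [set x in set_nth 1 s i y] = y |: others s i.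
Proof.
move=> lt_i; have sz_set : size (set_nth 1 s i y) = size s.
  by rewrite size_set_nth (maxn_idPr lt_i).
apply/setP=> x; rewrite !inE; apply/idP/idP.
  case/(nthP 1)=> l; rewrite sz_set nth_set_nth /= => lt_l <-.
  by case: (eqVneq l i) => [_ | ne_li]; rewrite ?eqxx ?mem_others ?orbT.
case/orP=> [/eqP -> | /imsetP[l]].
  by apply/(nthP 1); exists i; rewrite ?sz_set // nth_set_nth /= eqxx.
rewrite inE => ne_li ->; apply/(nthP 1).
by exists l; rewrite ?sz_set // nth_set_nth /= (negPf ne_li).
Qed.

Lemma seq_set_others s i : i < size s -> [set x in s] = nth 1 s i |: others s i.
Proof.
move=> lt_i; have def_s : set_nth 1 s i (nth 1 s i) = s.
  apply: (@eq_from_nth _ 1); first by rewrite size_set_nth (maxn_idPr lt_i).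
  by move=> l _; rewrite nth_set_nth /=; case: eqP => // ->.
by rewrite -set_nth_others // def_s.
Qed.

Lemma others_sub_seq s i : others s i \subset [set x in s].
Proof. by apply: others_subset => l lt_l _; rewrite inE mem_nth. Qed.

Definition delete_nth s r : seq gT :=
  [seq nth 1 s (bump r j) | j <- iota 0 (size s).-1].

Lemma size_delete_nth s r : size (delete_nth s r) = (size s).-1.
Proof. by rewrite size_map size_iota. Qed.

Lemma nth_delete_nth s r j :
  j < (size s).-1 -> nth 1 (delete_nth s r) j = nth 1 s (bump r j).
Proof. by move=> lt_j; rewrite (nth_map 0) ?size_iota // nth_iota. Qed.

Lemma bump_ltn n r j : r < n -> j < n.-1 -> bump r j < n.
Proof. by rewrite /bump; case: (r <= j) => /=; lia. Qed.

Lemma seq_delete_nth s r : r < size s -> [set x in delete_nth s r] = others s r.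
Proof.
move=> lt_r; apply/eqP; rewrite eqEsubset; apply/andP; split.
  apply/subsetP=> x; rewrite inE => /(nthP 1)[j]; rewrite size_delete_nth => lt_j <-.
  by rewrite nth_delete_nth // mem_others ?bump_ltn // eq_sym neq_bump.
apply: others_subset => l lt_l ne_lr.
have lt_ul : unbump r l < (size s).-1.
  by move: ne_lr; rewrite /unbump; case: (ltnP r l) => /= cmp /eqP; lia.
by rewrite -(unbumpK (ne_lr : l \in predC1 r)) -nth_delete_nth // inE mem_nth
  ?size_delete_nth.
Qed.

Lemma others_delete_nth s r j : r < size s -> j < (size s).-1 ->
  others (delete_nth s r) j \subset others s (bump r j).
Proof.
move=> lt_r lt_j; apply: others_subset => l; rewrite size_delete_nth => lt_l ne_lj.
by rewrite nth_delete_nth // mem_others ?bump_ltn // (inj_eq (can_inj (bumpK r))).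
Qed.

Lemma set_nth_delete_nth s r j y : r < size s -> j < (size s).-1 ->
  [set x in set_nth 1 (delete_nth s r) j y] \subset [set x in set_nth 1 s (bump r j) y].
Proof.
move=> lt_r lt_j; rewrite !set_nth_others ?size_delete_nth ?bump_ltn //.
by rewrite setUS // others_delete_nth.
Qed.

End Others.

Section Generation.
Variable gT : finGroupType.
Implicit Types (s : seq gT) (G : {group gT}).

Lemma irr_gen_delete_nth G s r :
  irr_gen G s -> r < size s -> irr_gen <<others s r>> (delete_nth s r).
Proof.
move=> /andP[_ /forallP irr_s] lt_r; rewrite /irr_gen seq_delete_nth // eqxx /=.
apply/forallP=> j; have lt_j : j < (size s).-1 by rewrite -(size_delete_nth s r).
rewrite nth_delete_nth //; apply: contra (irr_s (Ordinal (bump_ltn lt_r lt_j))).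
exact/subsetP/genS/others_delete_nth.
Qed.

Lemma gen_set_nth_subset G s i y : <<[set x in s]>> = G -> i < size s -> y \in G ->
  <<[set x in set_nth 1 s i y]>> \subset G.
Proof.
move=> genG lt_i Gy; rewrite gen_subG set_nth_others // subUset sub1set Gy -genG.
exact: subset_trans (others_sub_seq s i) (subset_gen _).
Qed.

Lemma gen_set_nth_supset s i y : i < size s ->
  nth 1 s i \in <<[set x in set_nth 1 s i y]>> ->
  <<[set x in s]>> \subset <<[set x in set_nth 1 s i y]>>.
Proof.
move=> lt_i s_i; rewrite gen_subG (seq_set_others lt_i) subUset sub1set s_i.
by rewrite set_nth_others // (subset_trans (subsetUr _ _) (subset_gen _)).
Qed.

Lemma nth_notin_proper G s i (M : {group gT}) :
  <<[set x in s]>> = G -> i < size s -> others s i \subset M -> M \proper G ->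
  nth 1 s i \notin M.
Proof.
move=> genG lt_i sM; rewrite properE => /andP[_]; apply: contra => Ms_i.
by rewrite -genG gen_subG (seq_set_others lt_i) subUset sub1set Ms_i.
Qed.

Lemma gen_pos_witnesses G k (M : 'I_k -> {set gT}) (x : 'I_k -> gT) :
  (forall j, x j \in G) -> (forall i j, i != j -> x j \in M i) ->
  (forall j, x j \notin M j) -> gen_pos G M.
Proof.
move=> Gx xM xnM j; rewrite properE; apply/andP; split.
  by apply/setIS/subsetP=> y /bigcapP My; apply/bigcapP=> i _; apply: My.
have xcap : x j \in \bigcap_(i | i != j) M i.
  by apply/bigcapP=> i; exact: xM.
apply/negP=> /subsetP/(_ (x j)); rewrite !inE Gx xcap => /(_ isT)/bigcapP/(_ j isT).
exact/negP/xnM.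
Qed.

Lemma exists_maximal_family G k (A : 'I_k -> {set gT}) :
  (forall i, <<A i>> \proper G) ->
  exists M : 'I_k -> {group gT}, forall i, maximal (M i) G /\ A i \subset M i.
Proof.
move=> proper_A; suff max_A i : exists M : {group gT}, maximal M G /\ A i \subset M.
  exact: fin_all_exists max_A.
have [eq_AG | [M maxM sAM]] := maximal_exists (proper_sub (proper_A i)).
  by move: (proper_A i); rewrite -eq_AG properxx.
by exists M; split; last exact: subset_trans (subset_gen _) sAM.
Qed.

Lemma gen_set_nth_delete_nth s r j y : r < size s -> j < (size s).-1 ->
  <<[set x in set_nth 1 (delete_nth s r) j y]>> = <<others s r>> ->
  <<[set x in s]>> \subset <<[set x in set_nth 1 s (bump r j) y]>>.
Proof.
move=> lt_r lt_j gen_t; apply: gen_set_nth_supset; first exact: bump_ltn.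
apply: (subsetP (genS (set_nth_delete_nth y lt_r lt_j))).
by rewrite gen_t mem_gen // mem_others ?bump_ltn // eq_sym neq_bump.
Qed.

Lemma maximal_family_of_no_replacement G k (s : k.-tuple gT) g :
  <<[set x in s]>> = G -> g \in G ->
  (forall i : 'I_k, <<[set x in set_nth 1 s i g]>> != G) ->
  exists M : 'I_k -> {group gT},
    [/\ forall i, maximal (M i) G, forall i, g \in M i,
        forall i : 'I_k, <<others s i>> \subset M i &
        gen_pos G (fun i => M i : {set gT})].
Proof.
move=> genG Gg no_repl; have ltk (i : 'I_k) : i < size s by rewrite size_tuple.
have proper_repl (i : 'I_k) : <<[set x in set_nth 1 s i g]>> \proper G.
  by rewrite properEneq no_repl gen_set_nth_subset.
have [M maxM] := exists_maximal_family proper_repl.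
have sM i : g \in M i /\ <<others s i>> \subset M i.
  by have [_] := maxM i; rewrite set_nth_others // subUset sub1set gen_subG => /andP.
exists M; split=> [i | i | i |]; [exact: (maxM i).1 | exact: (sM i).1 | exact: (sM i).2 |].
apply: (gen_pos_witnesses (x := fun j => nth 1 s j)) => [j | i j ne_ij | j].
- by rewrite -genG mem_gen // inE mem_nth.
- by apply: (subsetP (sM i).2); rewrite mem_gen // mem_others // eq_sym.
- apply: nth_notin_proper genG (ltk j) _ (maxgroupp (maxM j).1).
  by rewrite -gen_subG; case: (sM j).
Qed.

End Generation.

Theorem proposition3p2 (gT : finGroupType) (G : {group gT}) (k : nat)
    (s : k.-tuple gT) :
  k <= mlen G ->
  irr_gen G s ->
  (forall M : 'I_k -> {group gT},
     (forall i : 'I_k, maximal (M i) G) ->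
     (forall i : 'I_k, <<others s i>> \subset M i) ->
     gen_pos G (fun i => (M i : {set gT})) ->
     exists r : 'I_k,
       [/\ (M r : {set gT}) = <<others s r>>,
           mlen (M r) = k.-1 &
           repl_group (M r)]) ->
  repl_seq G s.
Proof.
move=> _ irr_s hyp g Gg ntg; have /andP[/eqP genG _] := irr_s.
have ltk (i : 'I_k) : i < size s by rewrite size_tuple.
case: (boolP [exists i : 'I_(size s), <<[set x in set_nth 1 s i g]>> == G]).
  by case/existsP=> i /eqP; exists i.
rewrite negb_exists => /forallP no_repl.
have [M [maxM gM sM posM]] :=
  maximal_family_of_no_replacement genG Gg (fun i => no_repl (Ordinal (ltk i))).
have [r [Mr mlen_Mr repl_Mr]] := hyp M maxM sM posM.
have irr_t : irr_gen (M r) (delete_nth s r) by rewrite Mr (irr_gen_delete_nth irr_s).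
have size_t : size (delete_nth s r) = mlen (M r).
  by rewrite mlen_Mr size_delete_nth size_tuple.
have [j gen_t] := repl_Mr _ irr_t size_t g (gM r) ntg.
have lt_j : j < (size s).-1 by rewrite -(size_delete_nth s r).
case/negP: (no_repl (Ordinal (bump_ltn (ltk r) lt_j))).
rewrite eqEsubset gen_set_nth_subset ?bump_ltn //= -{1}genG.
by apply: gen_set_nth_delete_nth; rewrite ?gen_t -?Mr.
Qed.
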